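(* Let $G$ be a graph on $n$ vertices such that $G\neq K_n$ and $G\ne \overline{K_n}$ (i.e. $G$ is neither complete nor edgeless). Then \[ \operatorname{rank}(A_G+I)\cdot\operatorname{rank}(A_{\overline G}+I)\ \ge\ 2n. \] Moreover, equality holds if and only if $G$ or $\overline{G}$ is (isomorphic to) $K_{a,n-a}$ for some integer $a$ with $1\le a\le\lfloor n/2\rfloor$.
   Context: All graphs are simple (undirected, no loops or multiple edges). $A_G$ denotes the $n\times n$ adjacency matrix of $G$, $\overline{G}$ the complement of $G$, $I=I_n$ the $n\times n$ identity matrix, and $\operatorname{rank}$ is the rank over $\mathbb{R}$. $K_n$ is the complete graph on $n$ vertices, $\overline{K_n}$ the edgeless graph on $n$ vertices, and $K_{a,b}$ the complete bipartite graph with part sizes $a$ and $b$. *)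

From HB Require Import structures.
From mathcomp Require Import all_boot all_order all_algebra.
Set Implicit Arguments. Unset Strict Implicit. Unset Printing Implicit Defensive.
Import Order.TTheory GRing.Theory Num.Theory.

Definition simple_graph (T : finType) (e : rel T) : Prop :=
  (forall x y, e x y = e y x) /\ (forall x, ~~ e x x).

Definition compl_graph (T : finType) (e : rel T) : rel T :=
  fun x y => (x != y) && ~~ e x y.

Definition adjmx (R : nzRingType) (n : nat) (e : rel 'I_n) : 'M[R]_n :=
  \matrix_(i, j) ((e i j)%:R)%R.

Definition is_complete (T : finType) (e : rel T) : Prop :=
  forall x y, x != y -> e x y.

Definition is_edgeless (T : finType) (e : rel T) : Prop :=
  forall x y, ~~ e x y.

Definition complete_bipartite (a b : nat) : rel 'I_(a + b) :=
  fun i j => (i < a)%N != (j < a)%N.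

Definition graph_iso (T1 T2 : finType) (e1 : rel T1) (e2 : rel T2) : Prop :=
  exists f : T1 -> T2, bijective f /\ forall x y, e1 x y = e2 (f x) (f y).
Arguments complete_bipartite : clear implicits.

(* Write A and Ac for the matrices A_G + I and A_{co-G} + I, so that A + Ac = I + J is
   positive definite.  The parallel sum P = A (A + Ac)^-1 Ac = Ac (A + Ac)^-1 A has its
   row space inside those of both A and Ac, whence rank A + rank Ac >= n + rank P, and
   its quadratic form satisfies P[z] <= A[z - y] + Ac[y].  An induced path P3 of G gives
   a vector z with A[z] = -1, and one of co-G a vector with Ac[z] = -1.  If both exist,
   P is negative definite on a plane; if G (say) has no induced P3, it is a union of
   cliques and P is indefinite.  Either way rank P >= 2, so rank A + rank Ac >= n + 2,
   and since both ranks are at most n their product is at least 2n, with equality iff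
   one of them is 2.  Finally a symmetric 0/1 matrix with unit diagonal and a zero
   entry has rank at most 2 exactly when it is the matrix of an equivalence relation
   with two classes, i.e. when the complementary graph is complete bipartite. *)

From mathcomp Require Import all_boot all_order all_algebra.
From mathcomp Require Import ring lra zify.
Import Order.TTheory GRing.Theory Num.Theory.
Set Implicit Arguments. Unset Strict Implicit. Unset Printing Implicit Defensive.
Local Open Scope ring_scope.

Local Notation "''[' u , v ]_ M" := (form idfun M u v)
  (at level 0, M at level 2, format "''[' u ,  v ]_ M") : ring_scope.
Local Notation "''[' u ]_ M" := (form idfun M u u)
  (at level 0, M at level 2, format "''[' u ]_ M") : ring_scope.

Lemma det_mx22 (R : comNzRingType) (A : 'M[R]_2) :
  \det A = A 0 0 * A 1 1 - A 0 1 * A 1 0.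
Proof.
rewrite (expand_det_row _ 0) !big_ord_recl big_ord0 /cofactor !det_mx11 !mxE /=.
have l01 : lift 0 (0 : 'I_1) = 1 :> 'I_2 by apply: val_inj.
have l10 : lift 1 (0 : 'I_1) = 0 :> 'I_2 by apply: val_inj.
by rewrite l01 l10 /=; ring.
Qed.

Lemma row_col_mx2 (R : nzRingType) n (z1 z2 : 'rV[R]_n) (i : 'I_2) :
  row i (col_mx z1 z2) = if i == 0 then z1 else z2.
Proof.
apply/rowP=> k; rewrite !mxE; case: splitP => j; rewrite (ord1 j) => val_i.
  by rewrite (_ : i = 0) //; apply: val_inj.
by rewrite (_ : i = 1) //; apply: val_inj.
Qed.

Lemma mul_rV_col_mx2 (R : nzRingType) n (t : 'rV[R]_2) (z1 z2 : 'rV[R]_n) :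
  t *m col_mx z1 z2 = t 0 0 *: z1 + t 0 1 *: z2.
Proof.
rewrite mulmx_sum_row !big_ord_recl big_ord0 addr0 !row_col_mx2.
by rewrite (_ : lift 0 0 = 1) //; apply: val_inj.
Qed.

Section FieldForms.
Variables (F : fieldType) (n : nat).
Implicit Types (M N P Q : 'M[F]_n) (u v : 'rV[F]_n).

Lemma formE M u v : '[u, v]_M = (u *m M *m v^T) 0 0.
Proof. by rewrite /form map_mx_id. Qed.

Lemma form_mulmx M P Q u v : '[u *m P, v *m Q]_M = '[u, v]_(P *m M *m Q^T).
Proof. by rewrite !formE trmx_mul !mulmxA. Qed.

Lemma formDmx M N u v : '[u, v]_(M + N) = '[u, v]_M + '[u, v]_N.
Proof. by rewrite !formE mulmxDr mulmxDl mxE. Qed.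

Lemma formNmx M u v : '[u, v]_(- M) = - '[u, v]_M.
Proof. by rewrite !formE mulmxN mulNmx mxE. Qed.

Lemma form_sym M u v : M^T = M -> '[u, v]_M = '[v, u]_M.
Proof.
move=> symM; rewrite !formE -[u *m M *m v^T]trmxK [_^T 0 0]mxE.
by rewrite !trmx_mul trmxK symM mulmxA.
Qed.

Lemma mxrank_ge_gram k M (Z : 'M[F]_(k, n)) :
  Z *m M *m Z^T \in unitmx -> (k <= \rank (Z *m M))%N.
Proof. by move=> /mxrank_unit rk; apply: leq_trans (mxrankM_maxl _ Z^T); rewrite rk. Qed.

Lemma unitmx_gram2 M z1 z2 :
  (col_mx z1 z2 *m M *m (col_mx z1 z2)^T \in unitmx) =
  ('[z1]_M * '[z2]_M - '[z1, z2]_M * '[z2, z1]_M != 0).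
Proof.
have gramE (i j : 'I_2) : (col_mx z1 z2 *m M *m (col_mx z1 z2)^T) i j =
    '[row i (col_mx z1 z2), row j (col_mx z1 z2)]_M.
  by rewrite formE tr_row colE mulmxA -colE -!row_mul !mxE.
by rewrite unitmxE det_mx22 unitfE !gramE !row_col_mx2.
Qed.

Lemma mxrank_ge2_form M z1 z2 :
  '[z1]_M * '[z2]_M - '[z1, z2]_M * '[z2, z1]_M != 0 -> (2 <= \rank M)%N.
Proof.
by rewrite -unitmx_gram2 => /mxrank_ge_gram /leq_trans; apply; apply: mxrankM_maxr.
Qed.

Definition parsummx M N := M *m invmx (M + N) *m N.

Section ParallelSum.
Variables M N : 'M[F]_n.
Hypothesis unitMN : M + N \in unitmx.

Let defN : N = (M + N) - M. Proof. by rewrite addrC addKr. Qed.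

Lemma parsummxE : parsummx M N = M - M *m invmx (M + N) *m M.
Proof. by rewrite /parsummx {2}defN mulmxBr -!mulmxA mulVmx // mulmx1. Qed.

Lemma parsummxC : parsummx M N = parsummx N M.
Proof.
by rewrite parsummxE /parsummx [N + M]addrC {2}defN !mulmxBl mulmxV // mul1mx.
Qed.

Lemma trmx_parsummx : M^T = M -> N^T = N -> (parsummx M N)^T = parsummx M N.
Proof.
move=> symM symN; rewrite {2}parsummxC /parsummx !trmx_mul trmx_inv linearD /=.
by rewrite symM symN mulmxA [N + M]addrC.
Qed.

Lemma mxrank_parsummx : (\rank (parsummx M N) + n <= \rank M + \rank N)%N.
Proof.
have sub_cap : (parsummx M N <= M :&: N)%MS.
  by rewrite sub_capmx {2}/parsummx submxMl parsummxC /parsummx submxMl.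
have sub_sum : ((M + N)%R <= M + N)%MS by apply: addmx_sub_adds.
have := mxrankS sub_cap; have := mxrankS sub_sum.
rewrite mxrank_unit // -(mxrank_sum_cap M N); lia.
Qed.

End ParallelSum.
End FieldForms.

Section RealForms.
Variables (R : realFieldType) (n : nat).
Implicit Types (M N : 'M[R]_n) (u v w y z : 'rV[R]_n).

Lemma unitmx_posdef M : (forall u, u != 0 -> 0 < '[u]_M) -> M \in unitmx.
Proof.
move=> posM; rewrite -row_free_unit; apply/inj_row_free => u uM0.
apply/eqP/negPn/negP => /posM.
by rewrite formE uM0 mul0mx mxE ltxx.
Qed.

Lemma form_invmx_ge0 M w : M^T = M -> M \in unitmx ->
  (forall u, 0 <= '[u]_M) -> 0 <= '[w]_(invmx M).
Proof.
move=> symM unitM psdM.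
by rewrite -[invmx M]mul1mx -(mulVmx unitM) -{3}symM -trmx_inv -form_mulmx.
Qed.

Section ParallelSum.
Variables M N : 'M[R]_n.
Hypotheses (symM : M^T = M) (symN : N^T = N) (unitMN : M + N \in unitmx).
Hypothesis psdMN : forall u, 0 <= '[u]_(M + N).

Lemma form_parsummx_le z y : '[z]_(parsummx M N) <= '[z - y]_M + '[y]_N.
Proof.
have symMN : (M + N)^T = M + N by rewrite linearD /= symM symN.
set X := invmx (M + N).
have gap : '[z - y]_M + '[y]_N - '[z]_(parsummx M N) =
    '[y *m (M + N) - z *m M]_X.
  rewrite parsummxE // -/X !(formDl, formDr, formNl, formNr) !form_mulmx.
  rewrite symM symMN mulmxV // !mul1mx -[M *m X *m (M + N)]mulmxA mulVmx //.
  by rewrite mulmx1 !(formDmx, formNmx) (form_sym y z symM); ring.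
rewrite -subr_ge0 gap; exact: form_invmx_ge0.
Qed.

End ParallelSum.

Lemma mxrank_ge2_negdef M z1 z2 : M^T = M ->
  (forall a b, '[a *: z1 + b *: z2]_M <= - (a ^+ 2 + b ^+ 2)) -> (2 <= \rank M)%N.
Proof.
move=> symM negM; apply: (mxrank_ge2_form (z1 := z1) (z2 := z2)).
rewrite (form_sym z2 z1 symM); apply/eqP => det0.
(* A vanishing Gram determinant makes ['[z1, z2]_M *: z1 - '[z1]_M *: z2] isotropic. *)
have := negM 1 0; have := negM '[z1, z2]_M (- '[z1]_M).
rewrite scale1r scale0r addr0 !(formDl, formDr, formZl, formZr) (form_sym z2 z1 symM).
move: det0 => /=; move: ('[z1]_M : R) ('[z1, z2]_M : R) ('[z2]_M : R) => a b d.
clear; nra.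
Qed.

Lemma mxrank_ge2_indef M z1 z2 : M^T = M ->
  0 < '[z1]_M -> '[z2]_M < 0 -> (2 <= \rank M)%N.
Proof.
move=> symM pos1 neg2; apply: (mxrank_ge2_form (z1 := z1) (z2 := z2)).
rewrite (form_sym z2 z1 symM); apply/eqP=> hdet.
have := sqr_ge0 '[z1, z2]_M; nra.
Qed.

End RealForms.

Section AllOnes.
Variables (R : realFieldType) (n : nat).
Local Notation J := (const_mx 1 : 'M[R]_n).
Implicit Types u : 'rV[R]_n.

Lemma form_1J u : '[u]_(1%:M + J) = \sum_k u 0 k ^+ 2 + (\sum_k u 0 k) ^+ 2.
Proof.
rewrite formDmx !formE mulmx1 !mxE [(\sum_k _) ^+ 2]expr2 big_distrr /=.
congr (_ + _); apply: eq_bigr => j _; rewrite !mxE ?expr2 //; congr (_ * _).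
by apply: eq_bigr => k _; rewrite !mxE mulr1.
Qed.

Lemma form_1J_ge0 u : 0 <= '[u]_(1%:M + J).
Proof. by rewrite form_1J addr_ge0 ?sqr_ge0 // sumr_ge0 // => k _; exact: sqr_ge0. Qed.

Lemma unitmx_1J : 1%:M + J \in unitmx.
Proof.
apply: unitmx_posdef => u u_neq0; rewrite form_1J ltr_wpDr ?sqr_ge0 //.
rewrite lt_def sumr_ge0 ?andbT => [|k _]; last exact: sqr_ge0.
apply: contra u_neq0 => /eqP /psumr_eq0P u2_eq0; apply/eqP/rowP => k.
by rewrite mxE; apply/eqP; rewrite -sqrf_eq0 u2_eq0 // => i _; rewrite sqr_ge0.
Qed.

Lemma form_ones_inv1J : '[const_mx 1]_(invmx (1%:M + J)) = n%:R / n.+1%:R.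
Proof.
have onesJ : (const_mx 1 : 'rV[R]_n) *m (1%:M + J) = n.+1%:R *: const_mx 1.
  apply/rowP => j; rewrite mulmxDr mulmx1 !mxE.
  under eq_bigr do rewrite !mxE mulr1.
  by rewrite sumr_const card_ord mulr1 mulrS.
have onesV : (const_mx 1 : 'rV[R]_n) *m invmx (1%:M + J) = n.+1%:R^-1 *: const_mx 1.
  have n1_neq0 : n.+1%:R != 0 :> R by rewrite pnatr_eq0.
  apply: (scalerI n1_neq0); rewrite scalemxAl -onesJ mulmxK ?unitmx_1J //.
  by rewrite scalerA mulfV // scale1r.
rewrite formE onesV -scalemxAl !mxE mulrC; congr (_ * _).
under eq_bigr do rewrite !mxE mulr1.
by rewrite sumr_const card_ord.
Qed.

End AllOnes.

Definition induced_P3 (T : finType) (e : rel T) (x w y : T) : bool :=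
  [&& e x w, e w y, x != y & ~~ e x y].

Definition P3_free (T : finType) (e : rel T) : bool :=
  [forall x, forall w, forall y, ~~ induced_P3 e x w y].

Lemma not_edgeless_edge (T : finType) (e : rel T) :
  ~ is_edgeless e -> exists x y, e x y.
Proof.
case: (pickP (fun p : T * T => e p.1 p.2)) => [[x y] exy|no_edge] not_edgeless.
  by exists x, y.
by case: not_edgeless => x y; rewrite (no_edge (x, y)).
Qed.

Section SimpleGraph.
Variables (T : finType) (e : rel T).
Hypothesis simple_e : simple_graph e.

Lemma edge_sym x y : e x y = e y x.
Proof. by case: simple_e. Qed.

Lemma edge_irr x : e x x = false.
Proof. by case: simple_e => _ /(_ x) /negbTE. Qed.

Lemma simple_compl_graph : simple_graph (compl_graph e).
Proof. by split=> [x y|x]; rewrite /compl_graph ?eqxx // eq_sym edge_sym. Qed.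

Lemma compl_graphK x y : compl_graph (compl_graph e) x y = e x y.
Proof.
rewrite /compl_graph negb_and negbK.
by case: eqVneq => [->|_] /=; rewrite ?edge_irr ?negbK.
Qed.

Lemma compl_not_complete : ~ is_edgeless e -> ~ is_complete (compl_graph e).
Proof.
move=> not_edgeless compl_complete; apply: not_edgeless => x y.
case: (eqVneq x y) => [->|neq_xy]; first by rewrite edge_irr.
by have := compl_complete x y neq_xy; rewrite /compl_graph neq_xy.
Qed.

Lemma compl_not_edgeless : ~ is_complete e -> ~ is_edgeless (compl_graph e).
Proof.
move=> not_complete compl_edgeless; apply: not_complete => x y neq_xy.
by have := compl_edgeless x y; rewrite /compl_graph neq_xy negbK.
Qed.

Lemma P3_free_nbh x y z : P3_free e -> e x y -> (x == z) || e x z = (y == z) || e y z.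
Proof.
move=> /forallP P3free exy.
have neq_xy : x != y by apply: contraTneq exy => ->; rewrite edge_irr.
have noP3 a b c : e a b -> e b c -> a != c -> e a c.
  move=> eab ebc neq_ac; have /forallP/(_ b)/forallP/(_ c) := P3free a.
  by rewrite /induced_P3 eab ebc neq_ac /= negbK.
case: (eqVneq x z) => [<-|neq_xz]; first by rewrite edge_sym exy orbT.
case: (eqVneq y z) => [<-|neq_yz]; first by rewrite exy.
apply/idP/idP => [exz|eyz]; last exact: noP3 exy eyz neq_xz.
by apply: noP3 exz neq_yz; rewrite edge_sym.
Qed.

Lemma P3_free_compl_P3 : P3_free e -> ~ is_complete e -> ~ is_edgeless e ->
  exists x w y, induced_P3 (compl_graph e) x w y.
Proof.
move=> P3free not_complete not_edgeless.
have [x [y exy]] := not_edgeless_edge not_edgeless.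
have [w /andP[neq_xw not_exw]] : exists w, (x != w) && ~~ e x w.
  case: (pickP (fun w => (x != w) && ~~ e x w)) => [w xw|no_w]; first by exists w.
  have x_adj z : x != z -> e x z.
    by move=> neq_xz; have := no_w z; rewrite neq_xz => /negbFE.
  case: not_complete => u v; case: (eqVneq u x) => [->|neq_ux neq_uv].
    exact: x_adj.
  have eux : e u x by rewrite edge_sym x_adj // eq_sym.
  have := P3_free_nbh v P3free eux; rewrite (negbTE neq_uv) /= => ->.
  by case: (eqVneq x v) => // /x_adj ->.
have not_eyw : ~~ e y w.
  apply: contra not_exw => eyw; rewrite -[e x w]orFb -(negbTE neq_xw).
  by rewrite (P3_free_nbh w P3free exy) eyw orbT.
have neq_xy : x != y by apply: contraTneq exy => ->; rewrite edge_irr.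
have neq_wy : w != y by apply: contraNneq not_exw => ->.
exists x, w, y; apply/and4P; split=> //; rewrite /compl_graph ?exy ?andbF //.
  by rewrite neq_xw.
by rewrite neq_wy edge_sym.
Qed.

End SimpleGraph.

Definition adjmxI (R : nzRingType) (n : nat) (e : rel 'I_n) : 'M[R]_n :=
  adjmx R e + 1%:M.

Section ClosedAdjacency.
Variables (R : fieldType) (n : nat) (e : rel 'I_n).
Hypothesis simple_e : simple_graph e.
Local Notation A := (adjmxI R e).
Local Notation Ac := (adjmxI R (compl_graph e)).

Lemma adjmxIE i j : A i j = ((i == j) || e i j)%:R.
Proof.
rewrite !mxE; case: eqVneq => [->|_]; first by rewrite edge_irr // add0r.
by rewrite addr0.
Qed.

Lemma trmx_adjmxI : A^T = A.
Proof. by apply/matrixP=> i j; rewrite mxE !adjmxIE eq_sym (edge_sym simple_e). Qed.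

Lemma adjmxI_compl : A + Ac = 1%:M + const_mx 1.
Proof.
apply/matrixP=> i j; rewrite !mxE /compl_graph.
case: eqVneq => [->|_] /=; first by rewrite edge_irr // !add0r.
by case: (e i j); rewrite /= ?add0r ?addr0.
Qed.

Lemma adjmxI_complK : adjmxI R (compl_graph (compl_graph e)) = A.
Proof. by apply/matrixP=> i j; rewrite !mxE compl_graphK. Qed.

Lemma form_adjmxI_P3 x w y : induced_P3 e x w y ->
  '['e_x + 'e_y - 'e_w]_A = -1.
Proof.
case/and4P=> exw ewy neq_xy not_exy.
have neq_xw : x != w by apply: contraTneq exw => ->; rewrite edge_irr.
have neq_wy : w != y by apply: contraTneq ewy => ->; rewrite edge_irr.
rewrite !(formDl, formDr, formNl, formNr) !formee !adjmxIE !eqxx.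
rewrite ![y == _]eq_sym ![w == x]eq_sym (negbTE neq_xy) (negbTE neq_xw).
rewrite (negbTE neq_wy) (edge_sym simple_e y x) (negbTE not_exy) exw ewy.
by rewrite (edge_sym simple_e w x) exw (edge_sym simple_e y w) ewy /=; ring.
Qed.

Lemma adjmxI_compl_rel : Ac = adjmx R [rel i j | ~~ e i j].
Proof.
apply/matrixP=> i j; rewrite !mxE /compl_graph.
by case: eqVneq => [->|_] /=; rewrite ?edge_irr ?add0r ?addr0.
Qed.

End ClosedAdjacency.
Section ParallelSumRank.
Variables (R : realFieldType) (n : nat) (e : rel 'I_n).
Hypothesis simple_e : simple_graph e.
Local Notation A := (adjmxI R e).
Local Notation Ac := (adjmxI R (compl_graph e)).
Local Notation M := (parsummx A Ac).

Let simple_ce := simple_compl_graph simple_e.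

Let unit_AAc : A + Ac \in unitmx.
Proof. by rewrite adjmxI_compl // unitmx_1J. Qed.

Lemma trmx_parsum_adjmxI : M^T = M.
Proof.
exact: trmx_parsummx unit_AAc (trmx_adjmxI _ simple_e) (trmx_adjmxI _ simple_ce).
Qed.

Lemma form_parsum_adjmxI_le z y : '[z]_M <= '[z - y]_A + '[y]_Ac.
Proof.
apply: (form_parsummx_le (trmx_adjmxI _ simple_e) (trmx_adjmxI _ simple_ce)
  unit_AAc) => u.
by rewrite adjmxI_compl // form_1J_ge0.
Qed.

Lemma mxrank_parsum_adjmxI_P3 x w y x' w' y' : induced_P3 e x w y ->
  induced_P3 (compl_graph e) x' w' y' -> (2 <= \rank M)%N.
Proof.
move=> P3 P3c; pose z1 : 'rV[R]_n := 'e_x + 'e_y - 'e_w.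
pose z2 : 'rV[R]_n := 'e_x' + 'e_y' - 'e_w'.
apply: (mxrank_ge2_negdef (z1 := z1) (z2 := z2) trmx_parsum_adjmxI) => a b.
apply: le_trans (form_parsum_adjmxI_le _ (b *: z2)) _.
rewrite addrK !(formZl, formZr) !form_adjmxI_P3 //.
by rewrite /= !mulrN1 !mulrN -!expr2 opprD.
Qed.

(* Weights inverse to the closed degrees; when G is a union of cliques every clique
   gets total weight 1, so that [invdeg *m A] is the all-ones row. *)
Definition invdeg : 'rV[R]_n := \row_v (\sum_j A v j)^-1.

Lemma deg_adjmxI_ge1 v : 1 <= \sum_j A v j.
Proof.
rewrite (bigD1 v) //= adjmxIE // eqxx lerDl.
by apply: sumr_ge0 => j _; rewrite adjmxIE.
Qed.

Lemma invdeg_adjmxI : P3_free e -> invdeg *m A = const_mx 1.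
Proof.
move=> P3free; apply/rowP=> j; rewrite [LHS]mxE [RHS]mxE.
have symA v : A v j = A j v by rewrite -[A in LHS]trmx_adjmxI // mxE.
transitivity (\sum_v (\sum_k A j k)^-1 * A j v).
  apply: eq_bigr => v _; rewrite [invdeg 0 v]mxE -symA.
  case: (boolP ((v == j) || e v j)) => [adj|nadj]; last first.
    by rewrite adjmxIE // (negbTE nadj) !mulr0.
  congr (_^-1 * _); apply: eq_bigr => k _; rewrite !adjmxIE //.
  by case/orP: adj => [/eqP->|evj] //; rewrite (P3_free_nbh simple_e k P3free evj).
rewrite -big_distrr /= mulVf //; apply: lt0r_neq0.
exact: lt_le_trans ltr01 (deg_adjmxI_ge1 j).
Qed.

Lemma sum_invdeg_ge1 : (0 < n)%N -> 1 <= \sum_v invdeg 0 v.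
Proof.
move=> n_gt0; apply: le_trans (_ : \sum_(v < n) n%:R^-1 <= _).
  by rewrite sumr_const card_ord -[_^-1 *+ n]mulr_natr mulVf // pnatr_eq0 -lt0n.
apply: ler_sum => v _; rewrite mxE lef_pV2 ?posrE ?ltr0n //.
- apply: le_trans (_ : \sum_(j < n) (1 : R) <= _); last by rewrite sumr_const card_ord.
  by apply: ler_sum => j _; rewrite adjmxIE //; case: (_ || _).
- exact: lt_le_trans ltr01 (deg_adjmxI_ge1 v).
Qed.

Lemma form_parsum_invdeg : P3_free e ->
  '[invdeg]_M = \sum_v invdeg 0 v - n%:R / n.+1%:R.
Proof.
move=> P3free; rewrite parsummxE // formDmx formNmx adjmxI_compl //.
rewrite -form_ones_inv1J -invdeg_adjmxI // form_mulmx trmx_adjmxI //.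
rewrite formE invdeg_adjmxI // mxE; congr (_ - _).
by apply: eq_bigr => v _; rewrite !mxE mul1r.
Qed.

Lemma mxrank_parsum_adjmxI_P3_free :
  P3_free e -> ~ is_complete e -> ~ is_edgeless e -> (2 <= \rank M)%N.
Proof.
move=> P3free not_complete not_edgeless.
have [x [w [y P3c]]] := P3_free_compl_P3 simple_e P3free not_complete not_edgeless.
apply: (mxrank_ge2_indef (z1 := invdeg) (z2 := 'e_x + 'e_y - 'e_w) trmx_parsum_adjmxI).
  have n_gt0 : (0 < n)%N by case: n x {P3c w y} => [[]|].
  rewrite form_parsum_invdeg // subr_gt0.
  apply: lt_le_trans (sum_invdeg_ge1 n_gt0).
  by rewrite ltr_pdivrMr ?ltr0n // mul1r ltr_nat.
apply: le_lt_trans (form_parsum_adjmxI_le _ ('e_x + 'e_y - 'e_w)) _.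
by rewrite subrr form0l add0r form_adjmxI_P3 // ltrN10.
Qed.

End ParallelSumRank.

Lemma mxrank_adjmxI_compl (R : realFieldType) n (e : rel 'I_n) :
  simple_graph e -> ~ is_complete e -> ~ is_edgeless e ->
  (n.+2 <= \rank (adjmxI R e) + \rank (adjmxI R (compl_graph e)))%N.
Proof.
move=> simple_e not_complete not_edgeless.
have simple_ce := simple_compl_graph simple_e.
have unitAAc : adjmxI R e + adjmxI R (compl_graph e) \in unitmx.
  by rewrite adjmxI_compl // unitmx_1J.
suff : (2 <= \rank (parsummx (adjmxI R e) (adjmxI R (compl_graph e))))%N.
  by have := mxrank_parsummx unitAAc; lia.
have [P3free|/forallPn[x /forallPn[w /forallPn[y /negbNE P3]]]] := boolP (P3_free e).
  exact: mxrank_parsum_adjmxI_P3_free.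
have [P3freec|/forallPn[x' /forallPn[w' /forallPn[y' /negbNE P3c]]]] :=
  boolP (P3_free (compl_graph e)); last exact: mxrank_parsum_adjmxI_P3 P3 P3c.
rewrite parsummxC // -[X in parsummx _ X](adjmxI_complK R simple_e).
apply: mxrank_parsum_adjmxI_P3_free => //.
  exact: compl_not_complete.
exact: compl_not_edgeless.
Qed.

Lemma natr_bool_inj (R : nzRingType) (b1 b2 : bool) : b1%:R = b2%:R :> R -> b1 = b2.
Proof. by case: b1; case: b2 => //= /eqP; rewrite ?oner_eq0 // eq_sym oner_eq0. Qed.

Section RankTwoRelation.
Variables (F : fieldType) (n : nat) (r : rel 'I_n).
Hypotheses (r_refl : reflexive r) (r_sym : symmetric r).
Local Notation X := (adjmx F r).

Lemma adjmx_row_span2 u v w : ~~ r u v -> (\rank X <= 2)%N ->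
  exists a b, forall k, X w k = a * X u k + b * X v k.
Proof.
move=> not_ruv rankX; pose Z := col_mx ('e_u : 'rV[F]_n) ('e_v : 'rV[F]_n) *m X.
have rankZ : (2 <= \rank Z)%N.
  apply: mxrank_ge_gram; rewrite unitmx_gram2 !formee !mxE r_refl (r_sym v u).
  by rewrite (negbTE not_ruv) r_refl mul1r mul0r subr0 oner_eq0.
have /submxP[t rowwX] : (row w X <= Z)%MS.
  apply: submx_trans (row_sub w X) _.
  by rewrite -(geq_leqif (mxrank_leqif_sup (submxMl _ X))) (leq_trans rankX).
exists (t 0 0), (t 0 1) => k.
have := congr1 (fun y : 'rV_n => y 0 k) rowwX.
by rewrite /Z mulmxA mul_rV_col_mx2 mulmxDl -!scalemxAl -!rowE !mxE.
Qed.

Lemma rank_le2_adjmx_classes u v : ~~ r u v -> (\rank X <= 2)%N ->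
  forall i j, r i j = (r u i == r u j).
Proof.
move=> not_ruv rankX.
have rowE w k : (r w k)%:R = (r u w)%:R * (r u k)%:R + (r v w)%:R * (r v k)%:R :> F.
  have [a [b rowE]] := adjmx_row_span2 w not_ruv rankX.
  have {}rowE l : (r w l)%:R = a * (r u l)%:R + b * (r v l)%:R :> F.
    by have := rowE l; rewrite !mxE.
  have aE : a = (r u w)%:R.
    by rewrite r_sym rowE r_refl (r_sym v u) (negbTE not_ruv) mulr1 mulr0 addr0.
  have bE : b = (r v w)%:R.
    by rewrite r_sym rowE r_refl (negbTE not_ruv) mulr1 mulr0 add0r.
  by rewrite rowE aE bE.
have uv_cover w : r v w = ~~ r u w.
  have := rowE w w; rewrite r_refl.
  case: (r u w); case: (r v w) => //=; rewrite ?mulr1 ?mulr0 ?addr0 //.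
    by rewrite -[X in X = _]addr0 => /addrI /eqP; rewrite eq_sym oner_eq0.
  by move/eqP; rewrite oner_eq0.
move=> i j; have := rowE i j; rewrite uv_cover (uv_cover j) (r_sym u j).
case: (r u i); rewrite /= ?mul1r ?mul0r ?addr0 ?add0r => /natr_bool_inj ->.
  by case: (r j u).
by case: (r j u).
Qed.

End RankTwoRelation.

Lemma mxrank_adjmx_bipartition (F : fieldType) n (r : rel 'I_n) (c : 'I_n -> bool) :
  (forall i j, r i j = (c i == c j)) -> (\rank (adjmx F r) <= 2)%N.
Proof.
move=> rE; pose W : 'M[F]_(2, n) :=
  \matrix_(i, j) (if i == 0 then (c j)%:R else (~~ c j)%:R).
have -> : adjmx F r = W^T *m W.
  apply/matrixP=> i j; rewrite !mxE rE big_ord_recl big_ord1 !mxE /=.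
  by case: (c i); case: (c j); rewrite /= ?mulr0 ?mulr1 ?addr0 ?add0r.
exact: leq_trans (mxrankM_maxr _ _) (rank_leq_row W).
Qed.

Lemma bipartition_iso n (f : rel 'I_n) (c : 'I_n -> bool) :
  (forall x y, f x y = (c x != c y)) ->
  graph_iso f (complete_bipartite #|[set x | c x]| (n - #|[set x | c x]|)).
Proof.
(* Listing the vertices of the first class first, a vertex's position in the list
   falls below [a] exactly when it lies in that class. *)
move=> fE; set P := [set x | c x]; set a := #|P|.
have a_le_n : (a <= n)%N by have := max_card P; rewrite card_ord.
have size_n : (a + (n - a))%N = n by rewrite subnKC.
set s := enum P ++ enum (~: P).
have size_s : size s = n by rewrite size_cat -!cardE cardsC card_ord.
have s_all x : x \in s by rewrite mem_cat !mem_enum in_setC; case: (x \in P).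
have uniq_s : uniq s.
  rewrite cat_uniq !enum_uniq /= andbT; apply/hasPn => x.
  by rewrite !mem_enum in_setC => ->.
have index_lt x : (index x s < a + (n - a))%N.
  by have := index_mem x s; rewrite s_all size_s size_n.
pose g x : 'I_(a + (n - a)) := Ordinal (index_lt x).
pose h (k : 'I_(a + (n - a))) : 'I_n := nth (cast_ord size_n k) s k.
exists g; split.
  exists h => [x|k]; first by rewrite /h /= nth_index.
  by apply: val_inj; rewrite /g /h /= index_uniq // size_s -{2}size_n.
have index_P z : (index z s < a)%N = c z.
  rewrite index_cat mem_enum; case: ifP => z_P.
    by rewrite /a cardE index_mem mem_enum z_P; move: z_P; rewrite inE.
  by rewrite /a cardE ltnNge leq_addr /=; move: z_P; rewrite inE => ->.
by move=> x y; rewrite fE /complete_bipartite /= !index_P.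
Qed.

Lemma bipartition_iso_half n (f : rel 'I_n) (c : 'I_n -> bool) :
  (forall x y, f x y = (c x != c y)) -> (exists x, c x) -> (exists y, ~~ c y) ->
  exists a, [/\ (1 <= a)%N, (a <= n./2)%N & graph_iso f (complete_bipartite a (n - a))].
Proof.
move=> fE [x0 cx0] [y0 cy0].
set P := [set x | c x]; set Q := [set x | ~~ c x].
have card_PQ : (#|P| + #|Q| = n)%N.
  rewrite (_ : Q = ~: P); first by rewrite cardsC card_ord.
  by apply/setP => x; rewrite !inE.
have P_gt0 : (0 < #|P|)%N by apply/card_gt0P; exists x0; rewrite inE.
have Q_gt0 : (0 < #|Q|)%N by apply/card_gt0P; exists y0; rewrite inE.
have [P_small|P_large] := leqP (2 * #|P|) n.
  exists #|P|; split=> //; last exact: bipartition_iso.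
  by rewrite geq_half_double -mul2n.
exists #|Q|; split=> //; first by rewrite geq_half_double -mul2n; lia.
apply: (@bipartition_iso _ _ (fun x => ~~ c x)) => x y.
by rewrite fE; case: (c x); case: (c y).
Qed.

Lemma mxrank_adjmxI_compl_le2 (R : fieldType) n (e : rel 'I_n) :
  simple_graph e -> ~ is_edgeless e ->
  (\rank (adjmxI R (compl_graph e)) <= 2)%N <->
  exists a, [/\ (1 <= a)%N, (a <= n./2)%N & graph_iso e (complete_bipartite a (n - a))].
Proof.
move=> simple_e not_edgeless; rewrite adjmxI_compl_rel //.
split=> [rank_le2|[a [_ _ [g [_ gE]]]]]; last first.
  apply: (@mxrank_adjmx_bipartition _ _ _ (fun x => (g x < a)%N)) => i j.
  by rewrite /= gE /complete_bipartite negbK.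
have [u [v euv]] := not_edgeless_edge not_edgeless.
have nonadj_refl : reflexive [rel i j | ~~ e i j] by move=> i; rewrite /= edge_irr.
have nonadj_sym : symmetric [rel i j | ~~ e i j] by move=> i j; rewrite /= edge_sym.
have not_ruv : ~~ [rel i j | ~~ e i j] u v by rewrite /= euv.
have classE := rank_le2_adjmx_classes nonadj_refl nonadj_sym not_ruv rank_le2.
apply: (bipartition_iso_half (c := fun x => ~~ e u x)); last by exists v; rewrite negbK.
  by move=> x y; have /= nexy := classE x y; rewrite -[e x y]negbK nexy.
by exists u; rewrite edge_irr.
Qed.

Lemma rank_product_bound (r s n : nat) : (r <= n)%N -> (s <= n)%N -> (n.+2 <= r + s)%N ->
  (2 * n <= r * s)%N /\ (r * s = 2 * n <-> r <= 2 \/ s <= 2)%N.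
Proof. by move=> *; split; [|split]; nia. Qed.

Theorem theorem4p2 (R : realFieldType) (n : nat) (e : rel 'I_n) :
  simple_graph e -> ~ is_complete e -> ~ is_edgeless e ->
  (2 * n <= \rank (adjmx R e + 1%:M)%R * \rank (adjmx R (compl_graph e) + 1%:M)%R)%N /\
  ((\rank (adjmx R e + 1%:M)%R * \rank (adjmx R (compl_graph e) + 1%:M)%R = 2 * n)%N <->
   exists a : nat, [/\ (1 <= a)%N, (a <= n./2)%N &
     (graph_iso e (complete_bipartite a (n - a)) \/
      graph_iso (compl_graph e) (complete_bipartite a (n - a)))]).
Proof.
move=> simple_e not_complete not_edgeless.
have simple_ce := simple_compl_graph simple_e.
rewrite -/(adjmxI R e) -/(adjmxI R (compl_graph e)).
have [-> ->] := rank_product_bound (rank_leq_row _) (rank_leq_row _)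
  (mxrank_adjmxI_compl R simple_e not_complete not_edgeless).
split=> //; rewrite -[in X in X \/ _](adjmxI_complK R simple_e).
rewrite (mxrank_adjmxI_compl_le2 R simple_ce (compl_not_edgeless not_complete)).
rewrite (mxrank_adjmxI_compl_le2 R simple_e not_edgeless).
split=> [[[a [a_gt0 a_le iso_c]]|[a [a_gt0 a_le iso_e]]]|[a [a_gt0 a_le [iso_e|iso_c]]]].
- by exists a; split=> //; right.
- by exists a; split=> //; left.
- by right; exists a.
- by left; exists a.
Qed.
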